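(* Let $M$ be a real $n\times n$ matrix and $v\in\mathbb R^n$, and suppose $\|M-vv^\top\|\le\|M\|-\epsilon\|v\|^2$. Then if $u,w$ are top unit left and right singular vectors of $M$, respectively, $\langle u,v\rangle^2\ge\epsilon\|v\|^2$ or $\langle w,v\rangle^2\ge\epsilon\|v\|^2$.
   Context: $\|\cdot\|$ is the spectral norm for matrices and Euclidean norm for vectors. *)

From HB Require Import structures.
From mathcomp Require Import all_boot all_order all_algebra.
From mathcomp Require Import boolp classical_sets reals.
Set Implicit Arguments. Unset Strict Implicit. Unset Printing Implicit Defensive.
Import Order.TTheory GRing.Theory Num.Theory.
Local Open Scope ring_scope.
Local Open Scope classical_set_scope.

Definition vnorm (R : realType) (n : nat) (x : 'cV[R]_n) : R :=
  Num.sqrt (\sum_(i < n) x i 0 ^+ 2).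

Definition dotv (R : realType) (n : nat) (x y : 'cV[R]_n) : R :=
  \sum_(i < n) x i 0 * y i 0.

Definition specnorm (R : realType) (n : nat) (M : 'M[R]_n) : R :=
  sup [set vnorm (M *m x) | x in [set x : 'cV[R]_n | vnorm x = 1]].

Definition top_singular_pair (R : realType) (n : nat) (M : 'M[R]_n)
    (u w : 'cV[R]_n) : Prop :=
  [/\ vnorm u = 1, vnorm w = 1,
      M *m w = specnorm M *: u & M^T *m u = specnorm M *: w].

From HB Require Import structures.
From mathcomp Require Import all_boot all_order all_algebra.
From mathcomp Require Import boolp classical_sets reals.
From mathcomp Require Import ring lra.
Set Implicit Arguments. Unset Strict Implicit. Unset Printing Implicit Defensive.
Import Order.TTheory GRing.Theory Num.Theory.
Local Open Scope ring_scope.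

(* Since u^T M w = ||M||, the bilinear form u^T (M - v v^T) w equals
   ||M|| - <u,v><w,v>; it is at most |(M - v v^T) w| <= ||M - v v^T||
   <= ||M|| - eps |v|^2.  Hence <u,v><w,v> >= eps |v|^2, and a product can
   only dominate a bound if one of the two factors does so in square. *)

Lemma ler_mul_sqr (R : realDomainType) (a b c : R) :
  c <= a * b -> c <= a ^+ 2 \/ c <= b ^+ 2.
Proof.
move=> hab; case: (lerP c (a ^+ 2)) => ha; first by left.
right; case: (lerP c 0) => hc; first by have := sqr_ge0 b; lra.
case: (lerP c (b ^+ 2)) => hb //.
have : (a * b) ^+ 2 < c ^+ 2.
  by rewrite exprMn; have := sqr_ge0 a; have := sqr_ge0 b; nra.
nra.
Qed.

Section EuclideanSpace.
Variables (R : realType) (n : nat).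
Implicit Types (x y : 'cV[R]_n) (A : 'M[R]_n).

Lemma dotvE x y : dotv x y = (x^T *m y) 0 0.
Proof. by rewrite /dotv mxE; apply: eq_bigr => i _; rewrite mxE. Qed.

Lemma dotvC x y : dotv x y = dotv y x.
Proof. by apply: eq_bigr => i _; rewrite mulrC. Qed.

Lemma vnorm_ge0 x : 0 <= vnorm x.
Proof. exact: sqrtr_ge0. Qed.

Lemma vnorm_sqr x : vnorm x ^+ 2 = dotv x x.
Proof. by rewrite sqr_sqrtr //; apply: sumr_ge0 => i _; rewrite sqr_ge0. Qed.

Lemma dotv_unit_le_vnorm x y : vnorm x = 1 -> dotv x y <= vnorm y.
Proof.
move=> hx; have hxx : dotv x x = 1 by rewrite -vnorm_sqr hx expr1n.
set t := dotv x y.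
have hproj : \sum_(i < n) (y i 0 - t * x i 0) ^+ 2
    = dotv y y - 2 * t * dotv x y + t ^+ 2 * dotv x x.
  transitivity (\sum_(i < n) (y i 0 * y i 0 - (2 * t) * (x i 0 * y i 0)
                              + t ^+ 2 * (x i 0 * x i 0))).
    by apply: eq_bigr => i _; ring.
  by rewrite big_split sumrB /= -!mulr_sumr.
have : 0 <= \sum_(i < n) (y i 0 - t * x i 0) ^+ 2.
  by apply: sumr_ge0 => i _; rewrite sqr_ge0.
rewrite hproj hxx -/t => hproj_ge0.
have ht2 : t ^+ 2 <= vnorm y ^+ 2 by rewrite vnorm_sqr; lra.
have := vnorm_ge0 y; case: (lerP t 0) => ht hy; first lra.
by rewrite -(ler_pXn2r (n := 2)) // nnegrE ltW.
Qed.

Lemma unit_coord_le1 x (j : 'I_n) : vnorm x = 1 -> `|x j 0| <= 1.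
Proof.
move=> hx; have hxj : x j 0 ^+ 2 <= 1.
  rewrite -(expr1n _ 2) -hx /vnorm sqr_sqrtr; last first.
    by apply: sumr_ge0 => i _; rewrite sqr_ge0.
  by rewrite (bigD1 j) //= lerDl; apply: sumr_ge0 => k _; rewrite sqr_ge0.
by rewrite -(ler_pXn2r (n := 2)) ?nnegrE // real_normK ?num_real ?expr1n.
Qed.

(* Coordinates of a unit vector lie in [-1, 1], so |(A x)_i| is at most the
   l1-norm of row i of A. *)
Lemma vnorm_mulmx_bounded A : exists B, forall x,
  vnorm x = 1 -> vnorm (A *m x) <= B.
Proof.
exists (Num.sqrt (\sum_(i < n) (\sum_(j < n) `|A i j|) ^+ 2)) => x hx.
rewrite ler_sqrt; last by apply: sumr_ge0 => i _; rewrite sqr_ge0.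
apply: ler_sum => i _; rewrite mxE -real_normK ?num_real //.
rewrite ler_pXn2r ?nnegrE ?sumr_ge0 //; try by move=> j _; rewrite normr_ge0.
apply: (le_trans (ler_norm_sum _ _ _)); apply: ler_sum => j _.
by rewrite normrM ler_piMr ?unit_coord_le1.
Qed.

Lemma vnorm_mulmx_le_specnorm A x : vnorm x = 1 -> vnorm (A *m x) <= specnorm A.
Proof.
move=> hx; have [B hB] := vnorm_mulmx_bounded A.
apply: sup_upper_bound; last by exists x.
split; first by exists (vnorm (A *m x)), x.
by exists B => _ [y hy <-]; apply: hB.
Qed.

Lemma dotv_mulmx_sub_rank1 A v x y :
  dotv x ((A - v *m v^T) *m y) = dotv x (A *m y) - dotv x v * dotv y v.
Proof.
rewrite !dotvE mulmxBl mulmxBr [LHS]mxE [X in _ + X]mxE; congr (_ - _).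
rewrite !mulmxA -(mulmxA (x^T *m v)) mxE big_ord1 -!dotvE.
by rewrite [dotv v y]dotvC.
Qed.

Lemma dotv_top_singular_sub_rank1 A v u w : top_singular_pair A u w ->
  dotv u ((A - v *m v^T) *m w) = specnorm A - dotv u v * dotv w v.
Proof.
case=> hu _ hAw _; rewrite dotv_mulmx_sub_rank1 hAw; congr (_ - _).
rewrite !dotvE -scalemxAr mxE -dotvE -vnorm_sqr hu.
by rewrite expr1n mulr1.
Qed.

End EuclideanSpace.

Theorem mainTheorem14 (R : realType) (n : nat) (M : 'M[R]_n) (v : 'cV[R]_n)
    (eps : R) (u w : 'cV[R]_n) :
  specnorm (M - v *m v^T) <= specnorm M - eps * vnorm v ^+ 2 ->
  top_singular_pair M u w ->
  eps * vnorm v ^+ 2 <= dotv u v ^+ 2 \/ eps * vnorm v ^+ 2 <= dotv w v ^+ 2.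
Proof.
move=> hgap huw; apply: ler_mul_sqr.
have [hu hw _ _] := huw.
have hform := dotv_top_singular_sub_rank1 v huw.
have hcs := dotv_unit_le_vnorm ((M - v *m v^T) *m w) hu.
have hop := vnorm_mulmx_le_specnorm (M - v *m v^T) hw.
lra.
Qed.
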